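(* Let $X$ be an alphabet with $k\ge 1$ letters and let $n\ge 1$. Every word $w\in X^*$ with $|w|>k\cdot(n-1)^k$ (indeed every word with $|w|>\sum_{i=1}^k (n-1)^i$) has a position $j$ with the following property: for every complete ordered DFA $\mathcal{B}$ over $X$ with at most $n$ states and every state $q$ of $\mathcal{B}$, in the run of $\mathcal{B}$ on $w$ starting in $q$, the state reached before reading the $j$-th letter of $w$ equals the state reached after reading it (i.e. the run cycles at position $j$).
   Context: A DFA is ordered if its states can be linearly ordered so that every transition $p\xrightarrow{a}q$ satisfies $p\le q$. Complete means every state has exactly one outgoing transition per letter. *)

From mathcomp Require Import all_boot.
Set Implicit Arguments. Unset Strict Implicit. Unset Printing Implicit Defensive.

(* A complete DFA over alphabet X with state set Q is given by its total
   transition function delta : Q -> X -> Q (exactly one outgoing transition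
   per state and letter).  Initial/final states play no role here. *)

Definition linear_order (Q : Type) (le : rel Q) : Prop :=
  reflexive le /\ transitive le /\ antisymmetric le /\ total le.

Definition ordered_dfa (Q X : Type) (delta : Q -> X -> Q) : Prop :=
  exists le : rel Q, linear_order le /\ forall p a, le p (delta p a).

Definition run (Q X : Type) (delta : Q -> X -> Q) (q : Q) (u : seq X) : Q :=
  foldl delta q u.

Definition cycling_position (X : finType) (n : nat) (w : seq X) (j : nat) : Prop :=
  j < size w /\
  forall (Q : finType) (delta : Q -> X -> Q),
    #|Q| <= n -> ordered_dfa delta ->
    forall (q : Q) (x0 : X),
      delta (run delta q (take j w)) (nth x0 w j) = run delta q (take j w).

From mathcomp Require Import all_boot zify.
Set Implicit Arguments. Unset Strict Implicit. Unset Printing Implicit Defensive.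

(* An ordered DFA started in q loops at q until the first letter a with
   q.a <> q; that position is the first occurrence of a in w, and the run goes
   on from q.a, above which strictly fewer states lie.  So every position where
   some ordered DFA with at most n states changes state is "movable" in a sense
   that depends on w and n only.  If all positions of a word over k letters are
   movable, split it at the first occurrence of its last new letter: the prefix
   uses fewer letters, while the suffix contains no new letter, so its positions
   are movable with one state less.  This gives |w| <= (n-1) + ... + (n-1)^k. *)

Lemma dropl_cat (T : Type) n (s1 s2 : seq T) :
  n <= size s1 -> drop n (s1 ++ s2) = drop n s1 ++ s2.
Proof.
by move=> le_n_s1; rewrite -{1}(cat_take_drop n s1) -catA drop_size_cat ?size_takel.
Qed.

Section Movable.
Variables (X : eqType) (x0 : X).

Definition fresh (u : seq X) (t : nat) : bool := nth x0 u t \notin take t u.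

(* [movable r u j]: a run with at most [r] moves left may move at [j]: either
   [j] is a first occurrence, or the run first moves at a first occurrence
   [t < j] and goes on along [drop t.+1 u]. *)
Fixpoint movable (r : nat) (u : seq X) (j : nat) : bool :=
  if r is r'.+1 then
    fresh u j || has (fun t => fresh u t && movable r' (drop t.+1 u) (j - t.+1)) (iota 0 j)
  else false.

Lemma movableSP r u j :
  reflect (fresh u j \/ exists2 t, t < j & fresh u t /\ movable r (drop t.+1 u) (j - t.+1))
          (movable r.+1 u j).
Proof.
apply: (iffP orP) => [[|/hasP[t]] | [|[t t_lt_j [ft mt]]]]; try by left.
- by rewrite mem_iota => /andP[_ t_lt_j] /andP[ft mt]; right; exists t.
- by right; apply/hasP; exists t; rewrite ?mem_iota ?ft.
Qed.

Lemma movable_mono r r' u j : r <= r' -> movable r u j -> movable r' u j.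
Proof.
elim: r r' u j => [|r IH] [|r'] u j // le_rr' /movableSP[fj | [t t_lt_j [ft mt]]].
  by apply/movableSP; left.
by apply/movableSP; right; exists t; rewrite // (IH r').
Qed.

Lemma fresh_catl u v t : t < size u -> fresh (u ++ v) t = fresh u t.
Proof. by move=> t_lt; rewrite /fresh nth_cat t_lt takel_cat ?(ltnW t_lt). Qed.

Lemma fresh_catr v u t : fresh (v ++ u) (size v + t) -> fresh u t.
Proof.
rewrite /fresh nth_cat take_cat ltnNge leq_addr /= addKn mem_cat negb_or.
by case/andP.
Qed.

Lemma not_fresh_cat_old p u t :
  {subset u <= p} -> t < size u -> ~~ fresh (p ++ u) (size p + t).
Proof.
move=> sub_u_p t_lt; rewrite /fresh negbK nth_cat take_cat ltnNge leq_addr /= addKn.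
by rewrite mem_cat sub_u_p ?mem_nth.
Qed.

Lemma movable_catl r u v j : j < size u -> movable r (u ++ v) j -> movable r u j.
Proof.
elim: r u j => [|r IH] u j // j_lt /movableSP[fj | [t t_lt_j [ft mt]]]; apply/movableSP.
  by left; rewrite -(fresh_catl v).
have t_lt : t < size u := ltn_trans t_lt_j j_lt.
right; exists t; rewrite // -(fresh_catl v) //; split=> //.
apply: IH; first by rewrite size_drop; lia.
by rewrite -dropl_cat.
Qed.

Lemma movable_catr r v u j : movable r (v ++ u) (size v + j) -> movable r u j.
Proof.
elim: r v u j => [|r IH] v u j // /movableSP[fj | [t t_lt_j [ft mt]]].
  by apply/movableSP; left; apply: fresh_catr fj.
have [t_lt | /subnKC t_eq] := ltnP t (size v).
  apply: movable_mono (leqnSn r) _; apply: (IH (drop t.+1 v)).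
  by move: mt; rewrite dropl_cat // size_drop addnBAC.
apply/movableSP; right; exists (t - size v); first by lia.
rewrite -t_eq in ft; rewrite -t_eq -addnS subnDl addnC -drop_drop drop_size_cat // in mt.
by split=> //; apply: fresh_catr ft.
Qed.

Lemma movable_old_letters r p u j : {subset u <= p} -> j < size u ->
  movable r.+1 (p ++ u) (size p + j) -> movable r u j.
Proof.
move=> sub_u_p j_lt /movableSP[| [t t_lt_j [ft mt]]].
  by move/negP: (not_fresh_cat_old sub_u_p j_lt).
have t_lt : t < size p.
  rewrite ltnNge; apply: contraL ft => le_p_t.
  by rewrite -(subnKC le_p_t) not_fresh_cat_old //; lia.
apply: (movable_catr (v := drop t.+1 p)).
by move: mt; rewrite dropl_cat // size_drop addnBAC.
Qed.

End Movable.

Section MonotoneRun.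
Variables (X : eqType) (x0 : X) (Q : finType) (delta : Q -> X -> Q) (le : rel Q).
Hypotheses (le_refl : reflexive le) (le_trans : transitive le) (le_anti : antisymmetric le).
Hypothesis le_delta : forall p a, le p (delta p a).

Definition first_move (q : Q) (u : seq X) : nat := find (fun a => delta q a != q) u.

Lemma run_before_first_move q u i : i <= first_move q u -> run delta q (take i u) = q.
Proof.
elim: i => [|i IH] le_i; first by rewrite take0.
have i_lt : i < size u := leq_trans le_i (find_size _ _).
rewrite /run (take_nth x0 i_lt) foldl_rcons -/(run delta q (take i u)) IH ?(ltnW le_i) //.
by apply/eqP; move: (before_find x0 le_i) => /negbFE.
Qed.

Lemma run_after_first_move q u i (t := first_move q u) : t < size u ->
  run delta q (take (t.+1 + i) u) = run delta (delta q (nth x0 u t)) (take i (drop t.+1 u)).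
Proof.
move=> t_lt; rewrite takeD /run foldl_cat (take_nth x0 t_lt) foldl_rcons.
by rewrite -/(run delta q (take t u)) run_before_first_move.
Qed.

Lemma first_move_moves q u (t := first_move q u) : t < size u -> delta q (nth x0 u t) != q.
Proof.
by move=> t_lt; apply: (nth_find x0 (a := fun a => delta q a != q)); rewrite has_find.
Qed.

Lemma first_move_fresh q u : first_move q u < size u -> fresh x0 u (first_move q u).
Proof.
move=> t_lt; apply/negP => /(nthP x0)[i]; rewrite size_take t_lt => i_lt.
rewrite nth_take // => nth_i.
by have := before_find x0 i_lt; rewrite /= nth_i (negbTE (first_move_moves t_lt)).
Qed.

Lemma first_move_le q u j : j < size u ->
  delta (run delta q (take j u)) (nth x0 u j) != run delta q (take j u) ->
  first_move q u <= j.
Proof.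
move=> j_lt; rewrite leqNgt; apply: contraL => j_lt_t.
by rewrite run_before_first_move ?(ltnW j_lt_t) //; have := before_find x0 j_lt_t => /= ->.
Qed.

Lemma card_up_ltn q a : delta q a != q ->
  #|[set p | le (delta q a) p]| < #|[set p | le q p]|.
Proof.
move=> moves; apply: proper_card; apply/properP; split.
  by apply/subsetP => p; rewrite !inE; apply: le_trans.
exists q; rewrite !inE ?le_refl //; apply: contra moves => le_aq.
by apply/eqP/le_anti; rewrite le_aq le_delta.
Qed.

Lemma movable_of_move r q u j : #|[set p | le q p]| <= r.+1 -> j < size u ->
  delta (run delta q (take j u)) (nth x0 u j) != run delta q (take j u) ->
  movable x0 r u j.
Proof.
elim: r q u j => [|r IH] q u j up_q j_lt moves;
  have t_le_j := first_move_le j_lt moves; set t := first_move q u in t_le_j *;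
  have t_lt := leq_ltn_trans t_le_j j_lt;
  have up_lt : #|[set p | le (delta q (nth x0 u t)) p]| < _ :=
    card_up_ltn (first_move_moves t_lt).
  suff : 0 < #|[set p | le (delta q (nth x0 u t)) p]| by lia.
  by apply/card_gt0P; exists (delta q (nth x0 u t)); rewrite inE.
apply/movableSP; move: t_le_j; rewrite leq_eqVlt => /orP[/eqP <- | t_lt_j].
  by left; apply: first_move_fresh.
right; exists t => //; split; first exact: first_move_fresh.
apply: (IH (delta q (nth x0 u t))); first by lia.
  by rewrite size_drop; lia.
by rewrite nth_drop -run_after_first_move // subnKC.
Qed.

End MonotoneRun.

Lemma sum_powS m k :
  \sum_(1 <= i < k.+2) m ^ i = m * (1 + \sum_(1 <= i < k.+1) m ^ i).
Proof.
rewrite big_nat_recl // expn1 mulnDr muln1 big_distrr /=.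
by congr (_ + _); apply: eq_bigr => i _; rewrite expnS.
Qed.

Lemma sum_pow_leq m k : \sum_(1 <= i < k.+1) m ^ i <= k * m ^ k.
Proof.
have -> : k * m ^ k = \sum_(1 <= i < k.+1) m ^ k by rewrite sum_nat_const_nat subn1.
rewrite big_nat_cond [leqRHS]big_nat_cond.
apply: leq_sum => i /andP[/andP[i_gt0 i_le] _].
by case: m => [|m]; [rewrite exp0n | apply: leq_pexp2l].
Qed.

Section Counting.
Variables (X : eqType) (x0 : X).

Lemma split_at_new_letter k (u : seq X) : k < size (undup u) ->
  exists u1 c rest, [/\ u = u1 ++ c :: rest, size (undup u1) <= k
                       & k < size (undup (rcons u1 c))].
Proof.
elim/last_ind: u => [|u x IH] // k_lt.
have [few | /IH[u1 [c [rest [-> few1 many1]]]]] := leqP (size (undup u)) k.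
  by exists u, x, [::]; rewrite cats1.
by exists u1, c, (rcons rest x); rewrite rcons_cat.
Qed.

Lemma size_all_movable R k (u : seq X) : size (undup u) <= k ->
  (forall j, j < size u -> movable x0 R u j) -> size u <= \sum_(1 <= i < k.+1) R ^ i.
Proof.
elim: k u => [|k IHk] u.
  by case: u => // a u; rewrite leqn0 => /eqP/size0nil/undup_nil.
rewrite sum_powS.
suff bound r : r <= R -> size (undup u) <= k.+1 ->
    (forall j, j < size u -> movable x0 r u j) ->
    size u <= r * (1 + \sum_(1 <= i < k.+1) R ^ i).
  exact: bound.
elim: r u => [|r IHr] u le_rR letters_u mov_u.
  by case: u {letters_u} mov_u => // a u /(_ 0 isT).
have [few | /split_at_new_letter[u1 [c [rest [def_u few1 many1]]]]] :=
  leqP (size (undup u)) k.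
  have := IHk u few (fun j j_lt => movable_mono le_rR (mov_u j j_lt)).
  rewrite mulSn; lia.
have rest_old : {subset rest <= rcons u1 c}.
  have sub : {subset undup (rcons u1 c) <= undup u}.
    move=> y; rewrite !mem_undup def_u mem_rcons mem_cat !inE.
    by case/orP=> ->; rewrite ?orbT.
  have [_ same] := uniq_min_size (undup_uniq _) sub (leq_trans letters_u many1).
  by move=> y y_rest; rewrite -mem_undup same mem_undup def_u mem_cat inE y_rest !orbT.
have size_u1 : size u1 <= \sum_(1 <= i < k.+1) R ^ i.
  apply: IHk few1 _ => j j_lt; apply: movable_mono le_rR _.
  apply: (movable_catl (v := c :: rest) j_lt).
  by rewrite -def_u mov_u // def_u size_cat ltn_addr.
have size_rest : size rest <= r * (1 + \sum_(1 <= i < k.+1) R ^ i).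
  apply: IHr (ltnW le_rR) _ _ => [|j j_lt].
    apply: leq_trans letters_u; apply: uniq_leq_size (undup_uniq rest) _ => y.
    by rewrite !mem_undup def_u mem_cat inE => ->; rewrite !orbT.
  apply: (movable_old_letters rest_old j_lt).
  by rewrite cat_rcons -def_u mov_u // def_u size_cat size_rcons /=; lia.
rewrite def_u size_cat /= mulSn; lia.
Qed.

Lemma exists_not_movable R k (u : seq X) : size (undup u) <= k ->
  \sum_(1 <= i < k.+1) R ^ i < size u -> exists2 j, j < size u & ~~ movable x0 R u j.
Proof.
move=> letters long.
case: (pickP (fun j : 'I_(size u) => ~~ movable x0 R u j)) => [j | mov]; first by exists j.
suff : size u <= \sum_(1 <= i < k.+1) R ^ i by rewrite leqNgt long.
by apply: size_all_movable letters _ => j j_lt; apply/negbFE/(mov (Ordinal j_lt)).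
Qed.

End Counting.


Lemma cycling_position_of_not_movable (X : finType) (x0 : X) n w j : j < size w ->
  ~~ movable x0 (n - 1) w j -> cycling_position n w j.
Proof.
move=> j_lt immovable; split=> // Q delta card_Q.
move=> [le [[le_refl [le_trans [le_anti _]]] le_delta]] q x1.
rewrite (set_nth_default x0 x1 j_lt); apply/eqP; apply: contraNT immovable => moves.
apply: (movable_of_move le_refl le_trans le_anti le_delta _ j_lt moves).
by have := max_card [set p | le q p]; lia.
Qed.

Theorem mainTheorem4 (X : finType) (k n : nat) :
  #|X| = k -> 1 <= k -> 1 <= n ->
  (forall w : seq X, k * (n - 1) ^ k < size w ->
     exists j, cycling_position n w j) /\
  (forall w : seq X, \sum_(1 <= i < k.+1) (n - 1) ^ i < size w ->
     exists j, cycling_position n w j).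
Proof.
move=> card_X _ _.
have letters (w : seq X) : size (undup w) <= k.
  by rewrite -card_X -(card_uniqP (undup_uniq w)) max_card.
have cycling (w : seq X) :
    \sum_(1 <= i < k.+1) (n - 1) ^ i < size w -> exists j, cycling_position n w j.
  case: w => [|x0 w] // long.
  have [j j_lt immovable] := exists_not_movable x0 (letters _) long.
  by exists j; apply: cycling_position_of_not_movable immovable.
split=> // w long; apply: cycling; exact: leq_ltn_trans (sum_pow_leq _ _) long.
Qed.
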